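(* Run the UCB-like policy described in the context and let $\mathcal A$ be the event defined there. On the event $\mathcal A$, for every epoch $\ell\in\{1,\dots,q\}$, $$\sum_{i=1}^N\Big(\sqrt{n_i^{\ell-1}}\,\Big|\log\frac{\hat v_i^\ell}{v_i^*}\Big|-\Psi\Big)^2\le N\Psi^2,$$ and consequently $\big|\log(\hat v_i^\ell/v_i^* )\big|\le\varepsilon(n_i^{\ell-1})=\frac{(\sqrt N+1)\Psi}{\sqrt{n_i^{\ell-1}}}$ for all $i\in\mathcal N$.
   Context: Setting: $N$ products $\mathcal N=\{1,\dots,N\}$, a no-purchase option $0$, $K$ resources, horizon of $T$ periods. For $v\in\mathbb R_{>0}^N$ and $S\subseteq\mathcal N$ the MNL probabilities are $\varphi(i,S\mid v)=v_i/(1+\sum_{j\in S}v_j)$ for $i\in S$, $\varphi(0,S\mid v)=1/(1+\sum_{j\in S}v_j)$, $\varphi(i,S\mid v)=0$ for $i\in\mathcal N\setminus S$. The unknown true vector $v^*$ satisfies $v_i^*\in[1/R,R]$. In period $t$ the retailer offers $S_t\subseteq\mathcal N$ and the customer chooses $I_t\in S_t\cup\{0\}$ with conditional probability $\varphi(I_t,S_t\mid v^* )$ given the past. Product $i$ has revenue $r(i)\in[0,1]$ and consumption $a(i,k)\in[0,1]$ of resource $k$, resource $k$ has inventory $Tc(k)$. UCB-like policy: parameters $\tau$ (a multiple of $N$), switch budget $L$, $\delta\in(0,1)$, $q=\lfloor (L-N)/(K+1)\rfloor\ge1$; $\Psi=\frac{R(1+NR)^2}{2}\sqrt{2+4\log\frac{2T^{1/2}q(K+1)N}{\delta}}$,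 $\varepsilon(n)=(\sqrt N+1)\Psi/\sqrt n$. Warm start: for $i=1,\dots,N$ offer $S_t=\{i\}$ for $t=(i-1)\tau/N+1,\dots,i\tau/N$. Let $T_0=\tau$, $T_\ell=\ell\lfloor (T-\tau)/q\rfloor+\tau$. In epoch $\ell$: let $n_i^{\ell-1}=\sum_{t=1}^{T_{\ell-1}}\mathbb I(i\in S_t)$; the MLE is $\hat v^\ell=e^{\hat\theta}$ where $\hat\theta$ minimizes the negative log-likelihood $\mathcal L_{\ell-1}(\theta)=-\sum_{t=1}^{T_{\ell-1}}\big[\theta_{I_t}-\log(1+\sum_{i\in S_t}e^{\theta_i})\big]$ ($\theta_0:=0$) over $\theta$ with $e^{\theta_i}\in[1/R,R]$; the assortments in periods $T_{\ell-1}+1,\dots,T_\ell$ are then chosen (by solving an LP built from $\hat v^\ell$ and randomizing) based only on data up to $T_{\ell-1}$. Event: with $\theta^*=(\log v_i^* )_i$, $\mathcal A_{i,\ell}=\{|\partial\mathcal L_{\ell-1}/\partial\theta_i(\theta^* )|\le\sqrt{2n_i^{\ell-1}(1+2\log\frac{2\sqrt TqN}{\delta})}\}$ and $\mathcal A=\bigcap_{i=1}^N\bigcap_{\ell=1}^q\mathcal A_{i,\ell}$. *)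

From HB Require Import structures.
From mathcomp Require Import all_boot all_order all_algebra.
From mathcomp Require Import all_classical all_reals all_analysis.
Set Implicit Arguments. Unset Strict Implicit. Unset Printing Implicit Defensive.
Import Order.TTheory GRing.Theory Num.Theory.
Import numFieldNormedType.Exports.
Local Open Scope ring_scope.

Section Defs.
Variables (R : realType) (N : nat).

(* A sample path: assortment S t : {set 'I_N} offered in period t (t >= 1),
   choice I t : option 'I_N, where None is the no-purchase option 0. *)

Definition theta_choice (th : 'rV[R]_N) (c : option 'I_N) : R :=
  if c is Some i then th 0 i else 0.

Definition negloglik (S : nat -> {set 'I_N}) (I : nat -> option 'I_N)
  (m : nat) (th : 'rV[R]_N) : R :=
  - \sum_(1 <= t < m.+1)
      (theta_choice th (I t) - ln (1 + \sum_(i in S t) expR (th 0 i))).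

Definition offer_count (S : nat -> {set 'I_N}) (m : nat) (i : 'I_N) : nat :=
  (\sum_(1 <= t < m.+1) (i \in S t))%N.

Definition in_box (Rb : R) (th : 'rV[R]_N) : Prop :=
  forall i : 'I_N, Rb^-1 <= expR (th 0 i) <= Rb.

Definition is_MLE S I (Rb : R) (m : nat) (th : 'rV[R]_N) : Prop :=
  in_box Rb th /\ forall th', in_box Rb th' -> negloglik S I m th <= negloglik S I m th'.

Definition dnegloglik S I (m : nat) (i : 'I_N) (th : 'rV[R]_N) : R :=
  'D_(delta_mx 0 i) (negloglik S I m) th.

End Defs.

Definition epoch_end (T tau q l : nat) : nat := (l * ((T - tau) %/ q) + tau)%N.

Definition num_epochs (Lsw N K : nat) : nat := ((Lsw - N) %/ K.+1)%N.

Definition Psi (R : realType) (Rb : R) (N T K q : nat) (delta : R) : R :=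
  Rb * (1 + N%:R * Rb) ^+ 2 / 2 *
  Num.sqrt (2 + 4 * ln (2 * Num.sqrt T%:R * q%:R * K.+1%:R * N%:R / delta)).

Definition eps_conf (R : realType) (N : nat) (psi : R) (n : nat) : R :=
  (Num.sqrt N%:R + 1) * psi / Num.sqrt n%:R.

(* warm start: for i = 1..N, S_t = {i} for t = (i-1)tau/N+1 .. i tau/N
   (products indexed 0..N-1 here) *)
Definition warm_start N (tau : nat) (S : nat -> {set 'I_N}) : Prop :=
  forall (i : 'I_N) (t : nat),
    (i * (tau %/ N) < t <= i.+1 * (tau %/ N))%N -> S t = [set i].

Definition event_A (R : realType) N S I (vstar : 'rV[R]_N) (T q tau : nat)
  (delta : R) : Prop :=
  forall (i : 'I_N) (l : nat), (1 <= l <= q)%N ->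
    let m := epoch_end T tau q l.-1 in
    `| dnegloglik S I m i (map_mx (@ln R) vstar) |
      <= Num.sqrt (2 * (offer_count S m i)%:R *
           (1 + 2 * ln (2 * Num.sqrt T%:R * q%:R * N%:R / delta))).

(* Restricted to the segment from theta* = ln v* to the MLE thhat, the negative
   log-likelihood L has second derivative at least
   c * sum_i n_i (thhat_i - theta*_i)^2 with c = (R (1 + N R)^2)^-1: each period
   contributes the variance of thhat - theta* under an MNL distribution whose
   weights lie in [1/R, R].  As thhat minimizes L over the convex box, the slope
   of the segment at theta*, which is <thhat - theta*, grad L at theta*>, plus this
   curvature is nonpositive.  On the event A the slope is at least
   -B sum_i sqrt(n_i) |thhat_i - theta*_i|, with Psi = B / (2 c).  Writing
   a_i = sqrt(n_i) |thhat_i - theta*_i| this gives sum a_i^2 <= 2 Psi sum a_i,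
   i.e. sum (a_i - Psi)^2 <= N Psi^2, so each a_i <= (sqrt N + 1) Psi. *)

From HB Require Import structures.
From mathcomp Require Import all_boot all_order all_algebra.
From mathcomp Require Import all_classical all_reals all_analysis.
From mathcomp Require Import ring lra.
Import Order.TTheory GRing.Theory Num.Theory.
Import numFieldNormedType.Exports.
Local Open Scope ring_scope.

Section derive_lemmas.
Context {R : realType}.

Lemma is_derive_big_sum (V W : normedModType R) (T : Type) (r : seq T)
    (P : pred T) (F : T -> V -> W) (dF : T -> W) (x v : V) :
  (forall i, P i -> is_derive x v (F i) (dF i)) ->
  is_derive x v (fun y => \sum_(i <- r | P i) F i y) (\sum_(i <- r | P i) dF i).
Proof.
rewrite -fct_sumE => dFP.
by elim/big_ind2 : _ => // *; [exact: is_derive_cst | exact: is_deriveD].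
Qed.

Lemma is_derive_ln_comp (f : R -> R) (x df : R) :
  is_derive x 1 f df -> 0 < f x -> is_derive x 1 (fun y => ln (f y)) (df / f x).
Proof.
move=> fdf fx_gt0; rewrite mulrC.
exact: (is_derive1_comp (is_derive1_ln fx_gt0) fdf).
Qed.

Lemma is_derive_div (f g : R -> R) (x df dg : R) :
  is_derive x 1 f df -> is_derive x 1 g dg -> g x != 0 ->
  is_derive x 1 (fun y => f y / g y) ((df * g x - f x * dg) / g x ^+ 2).
Proof.
move=> fdf gdg gx0.
rewrite (_ : (fun y => f y / g y) = f * (fun y => (g y)^-1)) //.
apply: is_derive_eq (is_deriveM fdf (is_deriveV gx0 gdg)) _.
by rewrite /GRing.scale /=; field.
Qed.

Lemma derive_along_line (V W : normedModType R) (f : V -> W) (a v : V) :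
  'D_v f a = 'D_1 (fun s : R => f (a + s *: v)) 0.
Proof.
rewrite /derive /= scale0r addr0; do 2 f_equal; apply/funext => h /=.
by rewrite addr0 [a + _]addrC [h%:A]mulr1.
Qed.

Lemma is_derive_affine (a b x : R) : is_derive x 1 (fun y => a + y * b) b.
Proof.
rewrite (_ : (fun y => a + y * b) = cst a + id * cst b) //.
apply: is_derive_eq (is_deriveD (is_derive_cst a x 1)
  (is_deriveM (is_derive_id x 1) (is_derive_cst b x 1))) _.
by rewrite /GRing.scale /=; ring.
Qed.

Lemma strongly_convex_min_slope (phi G H : R -> R) (k : R) :
  (forall x : R, is_derive x 1 phi (G x)) -> (forall x : R, is_derive x 1 G (H x)) ->
  0 <= k -> (forall x, 0 <= x <= 1 -> k <= H x) ->
  (forall s, 0 <= s <= 1 -> phi 1 <= phi s) ->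
  G 0 + k <= 0.
Proof.
move=> phiG GH k_ge0 Hk phi_min.
have slope_lt1 s : 0 <= s -> s < 1 -> G 0 + k * s <= 0.
  move=> s_ge0 s_lt1.
  have phi_cont := derivable_within_continuous (i := `[s, 1])
    (fun x _ => @ex_derive _ _ _ _ _ _ _ (phiG x)).
  have [xi /[!in_itv]/= /andP[sxi xi1] phiE] := MVT s_lt1 (fun x _ => phiG x) phi_cont.
  have Gxi_le0 : G xi <= 0.
    have : phi 1 - phi s <= 0 by rewrite subr_le0 phi_min // s_ge0 ltW.
    by rewrite phiE pmulr_lle0 // subr_gt0.
  have xi_ge0 : 0 <= xi by rewrite (le_trans s_ge0) ?ltW.
  have G_cont := derivable_within_continuous (i := `[0, xi])
    (fun x _ => @ex_derive _ _ _ _ _ _ _ (GH x)).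
  have [eta /[!in_itv]/= /andP[eta_ge0 eta_le] GE] :=
    MVT_segment xi_ge0 (fun x _ => GH x) G_cont.
  have : k * xi <= G xi - G 0.
    by rewrite GE subr0 ler_wpM2r // Hk // eta_ge0 (le_trans eta_le) ?ltW.
  have : k * s <= k * xi by rewrite ler_wpM2l // ltW.
  lra.
(* Let s tend to 1 along s = k / (e + k). *)
apply/ler_addgt0Pr => e e_gt0; rewrite add0r.
have ek_gt0 : 0 < e + k by lra.
pose s := k / (e + k).
have s_ge0 : 0 <= s by rewrite divr_ge0 // ltW.
have s_lt1 : s < 1 by rewrite ltr_pdivrMr // mul1r; lra.
have ks : k - k * s = k * e / (e + k) by rewrite /s; field; rewrite gt_eqF.
have : k * e / (e + k) <= e by rewrite ler_pdivrMr //; nra.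
have := slope_lt1 s s_ge0 s_lt1.
lra.
Qed.

End derive_lemmas.

Arguments is_derive_big_sum {R V W T r P F dF x v}.
Arguments is_derive_ln_comp {R f x df}.
Arguments is_derive_div {R f g x df dg}.

Section weighted_sums.
Context {R : realType} {I : finType}.
Variables (A : {pred I}) (w x : I -> R).

Lemma cauchy_schwarz_weighted : (forall j, 0 <= w j) ->
  (\sum_(j in A) w j * x j) ^+ 2 <= (\sum_(j in A) w j) * \sum_(j in A) w j * x j ^+ 2.
Proof.
move=> w_ge0.
set W := \sum_(j in A) w j; set P := \sum_(j in A) w j * x j.
set Q := \sum_(j in A) w j * x j ^+ 2.
have inner k : \sum_(j in A) w j * (x j - x k) ^+ 2 = Q - P * (2 * x k) + W * x k ^+ 2.
  rewrite (eq_bigr (fun j => w j * x j ^+ 2 - w j * x j * (2 * x k) + w j * x k ^+ 2)).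
    by rewrite big_split sumrB /= -!mulr_suml.
  by move=> j _; ring.
have : 0 <= \sum_(k in A) w k * \sum_(j in A) w j * (x j - x k) ^+ 2.
  by do 2 (apply: sumr_ge0 => ? _; apply: mulr_ge0 => //); rewrite ?sqr_ge0.
have -> : \sum_(k in A) w k * \sum_(j in A) w j * (x j - x k) ^+ 2
          = W * Q - P * (2 * P) + Q * W.
  rewrite (eq_bigr (fun k => w k * Q - w k * x k * (2 * P) + w k * x k ^+ 2 * W)).
    by rewrite big_split sumrB /= -!mulr_suml.
  by move=> k _; rewrite inner; ring.
nra.
Qed.

(* The right-hand side is the variance of [x] under the MNL choice probabilities
   [w j / (1 + W)], the no-purchase option carrying [x = 0]. *)
Lemma mnl_variance_ge (rho : R) : 0 < rho -> (forall j, rho^-1 <= w j <= rho) ->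
  (rho * (1 + #|I|%:R * rho) ^+ 2)^-1 * \sum_(j in A) x j ^+ 2 <=
  ((\sum_(j in A) w j * x j ^+ 2) * (1 + \sum_(j in A) w j)
     - (\sum_(j in A) w j * x j) ^+ 2) / (1 + \sum_(j in A) w j) ^+ 2.
Proof.
move=> rho_gt0 w_box.
have w_ge0 j : 0 <= w j by case/andP: (w_box j) => + _; apply: le_trans; rewrite invr_ge0 ltW.
have cs := cauchy_schwarz_weighted w_ge0.
set W := \sum_(j in A) w j in cs *; set P := \sum_(j in A) w j * x j in cs *.
set Q := \sum_(j in A) w j * x j ^+ 2 in cs *; set X := \sum_(j in A) x j ^+ 2.
have W_ge0 : 0 <= W by exact: sumr_ge0.
have W_le : W <= #|I|%:R * rho.
  apply: (le_trans (ler_sum _ (fun j _ => proj2 (andP (w_box j))))).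
  by rewrite sumr_const -[rho *+ _]mulr_natl ler_pM2r // ler_nat max_card.
have Q_ge : rho^-1 * X <= Q.
  rewrite mulr_sumr; apply: ler_sum => j _.
  by rewrite ler_wpM2r ?sqr_ge0 //; case/andP: (w_box j).
have X_ge0 : 0 <= X by apply: sumr_ge0 => j _; exact: sqr_ge0.
have Q_le : Q <= Q * (1 + W) - P ^+ 2 by lra.
rewrite invfM -mulrA mulrC ler_pdivlMr ?exprn_gt0 ?ltr_wpDr //.
apply: le_trans Q_le; apply: le_trans Q_ge.
have B_le_M : (1 + W) ^+ 2 <= (1 + #|I|%:R * rho) ^+ 2 by nra.
have -> : (1 + #|I|%:R * rho) ^- 2 * X / rho * (1 + W) ^+ 2
          = rho^-1 * X * ((1 + W) ^+ 2 / (1 + #|I|%:R * rho) ^+ 2) by ring.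
apply: ler_piMr; first by rewrite mulr_ge0 // invr_ge0 ltW.
by rewrite ler_pdivrMr ?mul1r // exprn_gt0 // ltr_wpDr // mulr_ge0 // ltW.
Qed.
End weighted_sums.

Section mnl_line.
Context {R : realType} {N : nat}.
Variables (S : nat -> {set 'I_N}) (I : nat -> option 'I_N) (m : nat).
Implicit Types (th d : 'rV[R]_N) (s : R).

Definition line_weight th d s (j : 'I_N) := expR (th 0 j + s * d 0 j).

Definition line_norm th d s t := 1 + \sum_(j in S t) line_weight th d s j.

Definition line_moment (k : nat) th d s t :=
  \sum_(j in S t) line_weight th d s j * d 0 j ^+ k.

Definition nll_slope th d s :=
  - \sum_(1 <= t < m.+1)
      (theta_choice d (I t) - line_moment 1 th d s t / line_norm th d s t).

Definition nll_curvature th d s :=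
  \sum_(1 <= t < m.+1) (line_moment 2 th d s t * line_norm th d s t
                         - line_moment 1 th d s t ^+ 2) / line_norm th d s t ^+ 2.

Lemma line_norm_gt0 th d s t : 0 < line_norm th d s t.
Proof. by rewrite ltr_wpDr // sumr_ge0 // => j _; rewrite ltW ?expR_gt0. Qed.

Lemma is_derive_line_weight th d s j :
  is_derive s 1 (fun s => line_weight th d s j) (line_weight th d s j * d 0 j).
Proof.
rewrite (_ : (fun s => _) = expR \o fun s => th 0 j + s * d 0 j) //.
exact: is_derive1_comp (is_derive_expR _) (is_derive_affine _ _ _).
Qed.

Lemma is_derive_line_moment k th d s t :
  is_derive s 1 (fun s => line_moment k th d s t) (line_moment k.+1 th d s t).
Proof.
rewrite (_ : (fun s => _) = fun s => \sum_(j in S t)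
  ((fun s => line_weight th d s j) * cst (d 0 j ^+ k)) s) //.
apply: is_derive_eq (is_derive_big_sum (fun j _ =>
  is_deriveM (is_derive_line_weight th d s j) (is_derive_cst (d 0 j ^+ k) s 1))) _.
by apply: eq_bigr => j _; rewrite /GRing.scale /= exprS; ring.
Qed.

Lemma is_derive_line_norm th d s t :
  is_derive s 1 (fun s => line_norm th d s t) (line_moment 1 th d s t).
Proof.
rewrite (_ : (fun s => _) = cst 1 + fun s => \sum_(j in S t) line_weight th d s j) //.
apply: is_derive_eq (is_deriveD (is_derive_cst (1 : R) s 1)
  (is_derive_big_sum (fun j _ => is_derive_line_weight th d s j))) _.
by rewrite add0r.
Qed.

Lemma negloglik_line th d s :
  negloglik S I m (th + s *: d) = - \sum_(1 <= t < m.+1)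
    (theta_choice th (I t) + s * theta_choice d (I t) - ln (line_norm th d s t)).
Proof.
congr (- _); apply: eq_bigr => t _; congr (_ - ln (1 + _)).
  by case: (I t) => [i|] /=; rewrite ?mxE ?mulr0 ?addr0.
by apply: eq_bigr => j _; rewrite !mxE.
Qed.

Lemma is_derive_negloglik_line th d s :
  is_derive s 1 (fun s => negloglik S I m (th + s *: d)) (nll_slope th d s).
Proof.
rewrite (_ : (fun s => _) = - fun s => \sum_(1 <= t < m.+1)
    (theta_choice th (I t) + s * theta_choice d (I t) - ln (line_norm th d s t))).
  apply: is_deriveN (is_derive_big_sum (fun t _ => is_deriveB (is_derive_affine _ _ s)
    (is_derive_ln_comp (is_derive_line_norm th d s t) (line_norm_gt0 th d s t)))).
by apply/funext => s'; rewrite negloglik_line.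
Qed.

Lemma is_derive_nll_slope th d s :
  is_derive s 1 (nll_slope th d) (nll_curvature th d s).
Proof.
apply: is_derive_eq (is_deriveN (is_derive_big_sum (fun t _ => is_deriveB
  (is_derive_cst (theta_choice d (I t)) s 1)
  (is_derive_div (is_derive_line_moment 1 th d s t) (is_derive_line_norm th d s t)
     (lt0r_neq0 (line_norm_gt0 th d s t)))))) _.
by rewrite -sumrN; apply: eq_bigr => t _; rewrite sub0r opprK expr2.
Qed.

Lemma line_weight0 th d j : line_weight th d 0 j = expR (th 0 j).
Proof. by rewrite /line_weight mul0r addr0. Qed.

Lemma row_coord_delta th k : th 0 k = \sum_(i < N) th 0 i * (delta_mx 0 i : 'rV[R]_N) 0 k.
Proof. by rewrite {1}(row_sum_delta th) summxE; apply: eq_bigr => i _; rewrite mxE. Qed.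

Lemma dnegloglik_line i th : dnegloglik S I m i th = nll_slope th (delta_mx 0 i) 0.
Proof.
rewrite /dnegloglik derive_along_line.
exact: (@derive_val _ _ _ _ _ _ _ (is_derive_negloglik_line _ _ _)).
Qed.

Lemma nll_slope0_gradient th d :
  nll_slope th d 0 = \sum_(i < N) d 0 i * dnegloglik S I m i th.
Proof.
have choiceE c : theta_choice d c = \sum_(i < N) d 0 i * theta_choice (delta_mx 0 i) c.
  by case: c => [k|] /=; [exact: row_coord_delta | rewrite big1 // => i _; rewrite mulr0].
have momentE t :
    line_moment 1 th d 0 t = \sum_(i < N) d 0 i * line_moment 1 th (delta_mx 0 i) 0 t.
  rewrite /line_moment; under eq_bigr do rewrite expr1 row_coord_delta mulr_sumr.
  rewrite exchange_big; apply: eq_bigr => i _; rewrite mulr_sumr.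
  by apply: eq_bigr => j _; rewrite !line_weight0 mulrCA.
have normE i t : line_norm th (delta_mx 0 i) 0 t = line_norm th d 0 t.
  by congr (1 + _); apply: eq_bigr => j _; rewrite !line_weight0.
under eq_bigr do rewrite dnegloglik_line mulrN mulr_sumr.
rewrite sumrN exchange_big; congr (- _); apply: eq_bigr => t _.
rewrite choiceE momentE mulr_suml -sumrB; apply: eq_bigr => i _.
by rewrite normE mulrBr mulrA.
Qed.

Lemma sum_offer_count (f : 'I_N -> R) :
  \sum_(j < N) (offer_count S m j)%:R * f j = \sum_(1 <= t < m.+1) \sum_(j in S t) f j.
Proof.
under eq_bigr do rewrite /offer_count natr_sum mulr_suml.
rewrite exchange_big; apply: eq_bigr => t _; rewrite [RHS]big_mkcond.
by apply: eq_bigr => j _; case: (j \in S t); rewrite ?mul1r ?mul0r.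
Qed.

Lemma nll_curvature_ge {rho : R} {th d s} : 0 < rho ->
  (forall j, rho^-1 <= line_weight th d s j <= rho) ->
  (rho * (1 + N%:R * rho) ^+ 2)^-1 * \sum_(j < N) (offer_count S m j)%:R * d 0 j ^+ 2
    <= nll_curvature th d s.
Proof.
move=> rho_gt0 w_box; rewrite sum_offer_count mulr_sumr; apply: ler_sum => t _.
by have := mnl_variance_ge (S t) _ (fun j => d 0 j) _ rho_gt0 w_box; rewrite card_ord.
Qed.

Lemma expR_boxE (Rb x : R) : 0 < Rb ->
  (Rb^-1 <= expR x <= Rb) = (ln Rb^-1 <= x <= ln Rb).
Proof.
move=> Rb_gt0; have Rb_pos : Rb \is Num.pos by rewrite posrE.
have Rbinv_pos : Rb^-1 \is Num.pos by rewrite posrE invr_gt0.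
by rewrite -{1}(lnK Rbinv_pos) -{2}(lnK Rb_pos) !ler_expR.
Qed.

Lemma line_weight_box {Rb s : R} {th th'} : 0 < Rb ->
  in_box Rb th -> in_box Rb th' -> 0 <= s <= 1 ->
  forall j, Rb^-1 <= line_weight th (th' - th) s j <= Rb.
Proof.
move=> Rb_gt0 th_box th'_box /andP[s_ge0 s_le1] j; rewrite expR_boxE // !mxE.
move: (th_box j) (th'_box j); rewrite !expR_boxE // => /andP[? ?] /andP[? ?].
apply/andP; split; nra.
Qed.

Lemma in_box_segment {Rb s : R} {th th'} : 0 < Rb ->
  in_box Rb th -> in_box Rb th' -> 0 <= s <= 1 -> in_box Rb (th + s *: (th' - th)).
Proof.
move=> Rb_gt0 th_box th'_box s01 j.
by have := line_weight_box Rb_gt0 th_box th'_box s01 j; rewrite /line_weight !mxE.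
Qed.

Lemma mle_slope_curvature {Rb : R} {th th'} : 0 < Rb ->
  in_box Rb th -> is_MLE S I Rb m th' ->
  nll_slope th (th' - th) 0 + (Rb * (1 + N%:R * Rb) ^+ 2)^-1 *
    \sum_(j < N) (offer_count S m j)%:R * (th' - th) 0 j ^+ 2 <= 0.
Proof.
move=> Rb_gt0 th_box [th'_box th'_min].
apply: strongly_convex_min_slope (is_derive_negloglik_line _ _) (is_derive_nll_slope _ _) _ _ _.
- apply: mulr_ge0; first by rewrite invr_ge0 mulr_ge0 ?sqr_ge0 ?ltW.
  by apply: sumr_ge0 => j _; rewrite mulr_ge0 ?sqr_ge0.
- move=> x x01; apply: (nll_curvature_ge Rb_gt0).
  exact: line_weight_box Rb_gt0 th_box th'_box x01.
- move=> x x01; rewrite scale1r addrC subrK.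
  exact/th'_min/in_box_segment.
Qed.

Definition scaled_error th' th (i : 'I_N) :=
  Num.sqrt (offer_count S m i)%:R * `|th' 0 i - th 0 i|.

Lemma mle_scaled_error_bound {Rb B : R} {th th'} : 0 < Rb ->
  in_box Rb th -> is_MLE S I Rb m th' ->
  (forall i, `|dnegloglik S I m i th| <= Num.sqrt (offer_count S m i)%:R * B) ->
  \sum_(i < N) scaled_error th' th i ^+ 2
    <= Rb * (1 + N%:R * Rb) ^+ 2 * B * \sum_(i < N) scaled_error th' th i.
Proof.
move=> Rb_gt0 th_box th'_mle grad_le.
have := mle_slope_curvature Rb_gt0 th_box th'_mle.
rewrite nll_slope0_gradient.
set M := Rb * _; set a := scaled_error th' th.
have M_gt0 : 0 < M by rewrite mulr_gt0 // exprn_gt0 // ltr_wpDr // mulr_ge0 // ltW.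
have ->: \sum_(j < N) (offer_count S m j)%:R * (th' - th) 0 j ^+ 2 = \sum_(j < N) a j ^+ 2.
  apply: eq_bigr => j _; rewrite /a /scaled_error exprMn sqr_sqrtr // real_normK ?num_real //.
  by rewrite !mxE.
have slope_ge :
    - (B * \sum_(i < N) a i) <= \sum_(i < N) (th' - th) 0 i * dnegloglik S I m i th.
  rewrite mulr_sumr -sumrN; apply: ler_sum => i _; rewrite lerNl.
  have -> : B * a i = `|(th' - th) 0 i| * (Num.sqrt (offer_count S m i)%:R * B).
    by rewrite /a /scaled_error !mxE; ring.
  apply: le_trans (ler_norm _) _; rewrite normrN normrM.
  exact: (ler_wpM2l (normr_ge0 _) (grad_le i)).
move=> slope_curv_le0.
have : M^-1 * \sum_(i < N) a i ^+ 2 <= B * \sum_(i < N) a i by lra.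
by rewrite ler_pdivrMl // mulrA.
Qed.

End mnl_line.

Section centered_squares.
Context {R : rcfType} {n : nat}.
Variables (a : 'I_n -> R) (psi : R).

Lemma sum_sqr_subr_le : \sum_(i < n) a i ^+ 2 <= 2 * psi * \sum_(i < n) a i ->
  \sum_(i < n) (a i - psi) ^+ 2 <= n%:R * psi ^+ 2.
Proof.
have -> : \sum_(i < n) (a i - psi) ^+ 2
          = \sum_(i < n) a i ^+ 2 - 2 * psi * \sum_(i < n) a i + n%:R * psi ^+ 2.
  rewrite (eq_bigr (fun i => a i ^+ 2 - a i * (2 * psi) + psi ^+ 2)) => [|i _]; last by ring.
  by rewrite big_split sumrB /= -mulr_suml sumr_const card_ord -mulr_natl; ring.
lra.
Qed.

Lemma le_sqrt_add1_of_sum_sqr_subr (i : 'I_n) : 0 <= psi ->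
  \sum_(i < n) (a i - psi) ^+ 2 <= n%:R * psi ^+ 2 -> a i <= (Num.sqrt n%:R + 1) * psi.
Proof.
move=> psi_ge0 sum_le.
have sqr_le : (a i - psi) ^+ 2 <= (Num.sqrt n%:R * psi) ^+ 2.
  rewrite exprMn sqr_sqrtr // (le_trans _ sum_le) // (bigD1 i) //= lerDl.
  by apply: sumr_ge0 => j _; exact: sqr_ge0.
have sqrt_psi_ge0 : 0 <= Num.sqrt n%:R * psi by rewrite mulr_ge0 ?sqrtr_ge0.
case: (leP (a i - psi) 0) => [ai_le | ai_gt]; first by nra.
by rewrite ler_sqr ?nnegrE ?(ltW ai_gt) // in sqr_le; lra.
Qed.

End centered_squares.

Lemma offer_count_warm_start_gt0 {N tau m : nat} {S : nat -> {set 'I_N}} {i : 'I_N} :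
  (0 < tau)%N -> (N %| tau)%N -> (tau <= m)%N -> warm_start tau S ->
  (0 < offer_count S m i)%N.
Proof.
move=> tau_gt0 N_dvd_tau tau_le_m warm.
have N_gt0 : (0 < N)%N := leq_ltn_trans (leq0n i) (ltn_ord i).
have block_gt0 : (0 < tau %/ N)%N by rewrite divn_gt0 // dvdn_leq.
set t := (i.+1 * (tau %/ N))%N.
have St : S t = [set i] by apply: warm; rewrite ltn_pmul2r // ltnSn leqnn.
have t_le_m : (t <= m)%N.
  rewrite (leq_trans _ tau_le_m) // /t -[X in (_ <= X)%N](divnK N_dvd_tau).
  by rewrite [X in (_ <= X)%N]mulnC leq_pmul2r.
rewrite /offer_count (bigD1_seq t) ?iota_uniq //=; first by rewrite St set11.
by rewrite mem_index_iota ltnS t_le_m andbT muln_gt0 block_gt0.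
Qed.

Lemma event_A_score_le {R : realType} {N : nat} (K : nat) {T tau q l : nat} {delta : R}
    {S : nat -> {set 'I_N}} {I : nat -> option 'I_N} {vstar : 'rV[R]_N} :
  (0 < N)%N -> (0 < T)%N -> 0 < delta ->
  event_A S I vstar T q tau delta -> (1 <= l <= q)%N ->
  let m := epoch_end T tau q l.-1 in
  forall i, `|dnegloglik S I m i (map_mx (@ln R) vstar)|
    <= Num.sqrt (offer_count S m i)%:R *
       Num.sqrt (2 + 4 * ln (2 * Num.sqrt T%:R * q%:R * K.+1%:R * N%:R / delta)).
Proof.
move=> N_gt0 T_gt0 delta_gt0 eventA l_range m i.
apply: le_trans (eventA i l l_range) _; rewrite -/m -sqrtrM // ler_wsqrtr //.
have q_gt0 : (0 < q)%N by case/andP: l_range; exact: leq_trans.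
set X := 2 * Num.sqrt T%:R * q%:R * N%:R / delta.
have sqrtT_gt0 : 0 < Num.sqrt T%:R :> R by rewrite sqrtr_gt0 ltr0n.
have X_gt0 : 0 < X by rewrite /X !mulr_gt0 ?invr_gt0 ?ltr0n.
have -> : 2 * Num.sqrt T%:R * q%:R * K.+1%:R * N%:R / delta = X * K.+1%:R.
  by rewrite /X; field; rewrite gt_eqF.
have XK_gt0 : 0 < X * K.+1%:R by rewrite mulr_gt0 // ltr0n.
have : ln X <= ln (X * K.+1%:R) by rewrite ler_ln ?posrE // ler_peMr ?ler1n ?ltW.
have : (0 : R) <= (offer_count S m i)%:R by [].
nra.
Qed.

Theorem theorem6 (R : realType) (N K T tau Lsw : nat) (Rb delta : R)
    (vstar : 'rV[R]_N) (S : nat -> {set 'I_N}) (I : nat -> option 'I_N) :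
  (0 < N)%N -> (0 < T)%N ->
  (0 < tau)%N -> (N %| tau)%N -> (tau <= T)%N ->
  (1 <= num_epochs Lsw N K)%N ->
  0 < delta < 1 -> 0 < Rb ->
  (forall i : 'I_N, Rb^-1 <= vstar 0 i <= Rb) ->
  warm_start tau S ->
  (forall t : nat, (1 <= t)%N ->
     match I t with Some i => i \in S t | None => true end) ->
  let q := num_epochs Lsw N K in
  let psi := Psi Rb N T K q delta in
  event_A S I vstar T q tau delta ->
  forall l : nat, (1 <= l <= q)%N ->
  let m := epoch_end T tau q l.-1 in
  forall thhat : 'rV[R]_N, is_MLE S I Rb m thhat ->
    \sum_(i < N) (Num.sqrt (offer_count S m i)%:R
                    * `| ln (expR (thhat 0 i) / vstar 0 i) | - psi) ^+ 2
      <= N%:R * psi ^+ 2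
    /\ forall i : 'I_N,
         `| ln (expR (thhat 0 i) / vstar 0 i) | <= eps_conf N psi (offer_count S m i).
Proof.
(* The bound holds for every data set starting with the warm start. *)
move=> N_gt0 T_gt0 tau_gt0 N_dvd_tau _ _ /andP[delta_gt0 _] Rb_gt0 vstar_box warm _
  q psi eventA l l_range m thhat thhat_mle.
set thstar := map_mx (@ln R) vstar.
have vstar_gt0 j : 0 < vstar 0 j.
  by case/andP: (vstar_box j) => + _; apply: lt_le_trans; rewrite invr_gt0.
have thstar_box : in_box Rb thstar by move=> j; rewrite mxE lnK ?posrE.
have lnE i : ln (expR (thhat 0 i) / vstar 0 i) = thhat 0 i - thstar 0 i.
  by rewrite lnM ?posrE ?invr_gt0 ?expR_gt0 // expRK lnV ?posrE // mxE.
have psiE : Rb * (1 + N%:R * Rb) ^+ 2 *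
    Num.sqrt (2 + 4 * ln (2 * Num.sqrt T%:R * q%:R * K.+1%:R * N%:R / delta)) = 2 * psi.
  by rewrite /psi /Psi; field.
have := mle_scaled_error_bound S I m Rb_gt0 thstar_box thhat_mle
  (event_A_score_le K N_gt0 T_gt0 delta_gt0 eventA l_range).
rewrite psiE => /sum_sqr_subr_le sum_le.
have psi_ge0 : 0 <= psi.
  suff : 0 <= 2 * psi by lra.
  rewrite -psiE; apply: mulr_ge0; last exact: sqrtr_ge0.
  by rewrite mulr_ge0 ?sqr_ge0 ?ltW.
split=> [|i]; first by under eq_bigr do rewrite lnE.
have n_gt0 : 0 < Num.sqrt (offer_count S m i)%:R :> R.
  by rewrite sqrtr_gt0 ltr0n (offer_count_warm_start_gt0 tau_gt0 N_dvd_tau _ warm) // leq_addl.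
rewrite lnE /eps_conf ler_pdivlMr // mulrC.
exact: le_sqrt_add1_of_sum_sqr_subr psi_ge0 sum_le.
Qed.
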